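(* There exists a $CS(3,K_4^{(3)}+e,gn+2)$ of type $(g^n:2)$ for each $(g,n)\in\{(5,3),(5,5),(10,2)\}$.
   Context: $K_4^{(3)}+e$ denotes the 3-uniform hypergraph with vertex set $\{1,2,3,4,5\}$ and edge set $\{\{1,2,3\},\{1,2,4\},\{1,3,4\},\{2,3,4\},\{3,4,5\}\}$. A $CS(3,K_4^{(3)}+e,gn+s)$ of type $(g^n:s)$ is a quadruple $(X,S,\mathcal{T},\mathcal{A})$ where $|X|=gn+s$, $S\subseteq X$ with $|S|=s$ (the stem), $\mathcal{T}=\{G_1,\dots,G_n\}$ is a partition of $X\setminus S$ into $n$ groups of size $g$, and $\mathcal{A}$ is a collection of hypergraphs on subsets of $X$ (blocks), each isomorphic to $K_4^{(3)}+e$, such that every 3-subset $T\subseteq X$ with $|T\cap(S\cup G_i)|<3$ for all $i$ is an edge of exactly one block, and no 3-subset of any $S\cup G_i$ is an edge of any block. Here $s=2$. *)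

From mathcomp Require Import all_boot.
Set Implicit Arguments. Unset Strict Implicit. Unset Printing Implicit Defensive.

(* Edges of K_4^(3)+e on vertex set {0,..,4} (paper's {1,..,5} shifted by 1):
   {1,2,3},{1,2,4},{1,3,4},{2,3,4},{3,4,5}. *)
Definition K4e_edges : seq {set 'I_5} :=
  [:: [set inord 0; inord 1; inord 2];
      [set inord 0; inord 1; inord 3];
      [set inord 0; inord 2; inord 3];
      [set inord 1; inord 2; inord 3];
      [set inord 2; inord 3; inord 4]].

(* A block on X is a hypergraph given by its edge set (a set of 3-subsets of X);
   it is a copy of K_4^(3)+e if it is the image of K4e_edges under an injective
   vertex map 'I_5 -> X. (K_4^(3)+e has no isolated vertex, so the vertex set
   of the block is the image of the map.) *)
Definition is_K4e_copy (X : finType) (B : {set {set X}}) : Prop :=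
  exists f : 'I_5 -> X, injective f /\
    B = [set f @: e | e : {set 'I_5} in K4e_edges].

Definition is_CS_K4e (X : finType) (g n s : nat) (S : {set X})
    (T : {set {set X}}) (A : {set {set {set X}}}) : Prop :=
  [/\ #|X| = g * n + s /\ #|S| = s,
      [/\ partition T (~: S), #|T| = n & (forall G, G \in T -> #|G| = g)],
      (forall B, B \in A -> is_K4e_copy B),
      (forall E : {set X}, #|E| = 3 ->
         (forall G, G \in T -> #|E :&: (S :|: G)| < 3) ->
         #|[set B in A | E \in B]| = 1)
    & (forall G (E : {set X}) B, G \in T -> #|E| = 3 -> E \subset S :|: G ->
         B \in A -> E \notin B)].

Definition CS_K4e_exists (g n s : nat) : Prop :=
  exists (S : {set 'I_(g * n + s)}) T A, @is_CS_K4e _ g n s S T A.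

From mathcomp Require Import all_boot zify.
Set Implicit Arguments.
Unset Strict Implicit.
Unset Printing Implicit Defensive.

(* With the points laid out as consecutive groups [j g, (j+1) g) followed by the stem,
   the stem and group axioms hold for all g, n, s. A block is given by the images of the
   five vertices of K_4^(3)+e, so its edges are sorted triples of naturals; the two
   remaining axioms (every edge meets each S ∪ G_i in fewer than three points, and every
   such triple is an edge of exactly one block) are then finite checks on triples,
   decided by computation for the three explicit designs. *)

Lemma card_ord_interval N a b : b <= N -> #|[set i : 'I_N | a <= i < b]| = b - a.
Proof.
move=> lebN; rewrite -sum1_card (eq_bigl (fun i : 'I_N => a <= i < b)) => [|i].
  rewrite -(big_mkord (fun i => a <= i < b) (fun=> 1)) -[b - a]muln1.
  rewrite -sum_nat_const_nat (big_nat_widen _ _ _ _ _ lebN) (big_nat_widenl a 0) //.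
  by apply: eq_bigl => i; rewrite andbC.
by rewrite inE.
Qed.

Section StemAndGroups.

Variables (g n N : nat).
Hypotheses (g_gt0 : 0 < g) (gn_leN : g * n <= N).

Definition stem : {set 'I_N} := [set i : 'I_N | g * n <= i].
Definition group (j : nat) : {set 'I_N} := [set i : 'I_N | j * g <= i < j * g + g].
Definition groups : {set {set 'I_N}} := [set group j | j : 'I_n].

Lemma card_stem : #|stem| = N - g * n.
Proof.
rewrite -(card_ord_interval (g * n) (leqnn N)).
by apply: eq_card => i; rewrite !inE ltn_ord andbT.
Qed.

Lemma mem_group_divn (i : 'I_N) j : (i \in group j) = (i %/ g == j).
Proof.
by rewrite inE eqn_leq andbC -[_ <= j]ltnS ltn_divLR // leq_divRL // mulSn addnC.
Qed.

Lemma group_bound j : j < n -> j * g + g <= N.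
Proof.
by move=> ltjn; apply: leq_trans gn_leN; rewrite addnC -mulSn [g * n]mulnC leq_mul2r ltjn orbT.
Qed.

Lemma card_group j : j < n -> #|group j| = g.
Proof. by move=> ltjn; rewrite card_ord_interval ?group_bound // addKn. Qed.

Lemma group_nonempty (j : 'I_n) : exists i : 'I_N, i \in group j.
Proof.
have ltjgN : j * g < N by have := group_bound (ltn_ord j); lia.
by exists (Ordinal ltjgN); rewrite inE /=; lia.
Qed.

Lemma group_inj : injective (fun j : 'I_n => group j).
Proof.
move=> j k eq_jk; have [i ij] := group_nonempty j.
have ik : i \in group k by rewrite -eq_jk.
by apply: ord_inj; move: ij ik; rewrite !mem_group_divn => /eqP <- /eqP.
Qed.

Lemma card_groups : #|groups| = n.
Proof. by rewrite card_imset ?card_ord //; exact: group_inj. Qed.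

Lemma partition_groups : partition groups (~: stem).
Proof.
apply/and3P; split.
- apply/eqP/setP => i; rewrite /cover in_setC inE -ltnNge.
  apply/bigcupP/idP => [[_ /imsetP [j _ ->]] | lt_i_gn].
    by rewrite mem_group_divn => /eqP ij; rewrite mulnC -ltn_divLR // ij.
  have lt_ig_n : i %/ g < n by rewrite ltn_divLR // mulnC.
  by exists (group (Ordinal lt_ig_n)); [exact: imset_f | rewrite mem_group_divn].
- apply/trivIsetP => _ _ /imsetP [j _ ->] /imsetP [k _ ->] neq_jk.
  rewrite -setI_eq0; apply/eqP/setP => i; rewrite inE in_set0 !mem_group_divn.
  apply/negP => /andP [/eqP ij /eqP ik]; move/eqP: neq_jk; apply.
  by congr group; rewrite -ij.
- by apply/imsetP => -[j _ j0]; have [i] := group_nonempty j; rewrite -j0 inE.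
Qed.

End StemAndGroups.

Definition in_stem_or_group g n j x := (g * n <= x) || (j * g <= x < j * g + g).

Definition allowed_triple g n (t : seq nat) :=
  ~~ has (fun j => all (in_stem_or_group g n j) t) (iota 0 n).

Section SetVals.

Variable N : nat.

Definition set_vals (E : {set 'I_N}) : seq nat := map val (enum E).

Lemma set_vals_sorted (E : {set 'I_N}) : sorted ltn (set_vals E).
Proof.
rewrite /set_vals -[enum _](eq_filter (mem_enum _)) -(eq_filter (mem_map val_inj _)).
by rewrite -filter_map (sorted_filter ltn_trans) // unlock val_ord_enum iota_ltn_sorted.
Qed.

Lemma all_set_vals (P : pred nat) (E : {set 'I_N}) :
  all P (set_vals E) = (E \subset [set i : 'I_N | P i]).
Proof.
rewrite all_map; apply/allP/subsetP => [allE i iE | subE i].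
  by rewrite inE; apply: allE; rewrite mem_enum.
by rewrite mem_enum => /subE; rewrite inE.
Qed.

Lemma allowed_set_valsP g n (E : {set 'I_N}) :
  reflect (forall j : 'I_n, ~~ (E \subset stem g n N :|: group g N j))
          (allowed_triple g n (set_vals E)).
Proof.
have stemU_group j : stem g n N :|: group g N j = [set i : 'I_N | in_stem_or_group g n j i].
  by apply/setP => i; rewrite !inE.
apply: (iffP hasPn) => [allowedE j | allowedE j].
  by rewrite stemU_group -all_set_vals (allowedE j) // mem_iota add0n ltn_ord.
rewrite mem_iota add0n => ltjn.
by have := allowedE (Ordinal ltjn); rewrite stemU_group -all_set_vals.
Qed.

Lemma set_vals_card3 (E : {set 'I_N}) : #|E| = 3 ->
  exists x y z, [/\ x < y < z, z < N & set_vals E = [:: x; y; z]].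
Proof.
move=> E3; have := set_vals_sorted E; have : size (set_vals E) = 3 by rewrite size_map -cardE.
have ltN i : i \in set_vals E -> i < N by case/mapP => k _ ->; exact: ltn_ord.
case: (set_vals E) ltN => [|x [|y [|z []]]] // ltN _ /and3P [ltxy ltyz _].
exists x, y, z; split => //; first exact/andP.
by apply: ltN; rewrite !inE eqxx !orbT.
Qed.

End SetVals.

Lemma imset_set_seq (aT rT : finType) (f : aT -> rT) (s : seq aT) :
  f @: [set:: s] = [set:: map f s].
Proof.
apply/setP => y; rewrite inE; apply/imsetP/mapP => -[x xs ->]; exists x => //.
  by rewrite inE in xs.
by rewrite inE.
Qed.

Lemma eq_set_seq_sort N (s1 s2 : seq 'I_N) : uniq s1 -> uniq s2 ->
  ([set:: s1] == [set:: s2]) = (sort leq (map val s1) == sort leq (map val s2)).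
Proof.
move=> uniq_s1 uniq_s2; apply/eqP/eqP => [eq_s12 | /perm_sortP eq_s12].
  apply/perm_sortP; [exact: leq_total | exact: leq_trans | exact: anti_leq |].
  apply/perm_map/uniq_perm => // i.
  by have := congr1 (fun A : {set 'I_N} => i \in A) eq_s12; rewrite !inE.
have /(perm_map_inj val_inj) /perm_mem mem_s12 := eq_s12 leq_total leq_trans anti_leq.
by apply/setP => i; rewrite !inE mem_s12.
Qed.

Definition K4e_pattern : seq (seq nat) :=
  [:: [:: 0; 1; 2]; [:: 0; 1; 3]; [:: 0; 2; 3]; [:: 1; 2; 3]; [:: 2; 3; 4]].

Lemma K4e_edgesE : K4e_edges = [seq [set:: map inord t] | t <- K4e_pattern].
Proof. by congr [:: _; _; _; _; _]; apply/setP => i; rewrite !inE orbA ?orbF. Qed.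

Lemma K4e_pattern_uniq_lt5 : all (fun t => uniq t && all (gtn 5) t) K4e_pattern.
Proof. by []. Qed.

Lemma map_inordK N (t : seq nat) : all (gtn N.+1) t -> map val (map inord t : seq 'I_N.+1) = t.
Proof.
move=> /allP t_lt; rewrite -map_comp -[RHS]map_id; apply/eq_in_map => i.
by move/t_lt/inordK.
Qed.

Section Blocks.

Variable m : nat.

Definition valid_block (p : seq nat) := [&& size p == 5, uniq p & all (fun x => x <= m) p].

Definition vertex_map (p : seq nat) (i : 'I_5) : 'I_m.+1 := inord (nth 0 p i).

Definition block (p : seq nat) : {set {set 'I_m.+1}} :=
  [set vertex_map p @: e | e : {set 'I_5} in K4e_edges].

Definition block_edges (p : seq nat) : seq (seq nat) :=
  [seq sort leq (map (nth 0 p) t) | t <- K4e_pattern].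

Variable p : seq nat.
Hypothesis p_valid : valid_block p.

Lemma vertex_map_inj : injective (vertex_map p).
Proof.
case/and3P: p_valid => /eqP size_p uniq_p /allP p_le_m i j.
have ltp k : k < 5 -> nth 0 p k < m.+1 by move=> lt_k5; apply: p_le_m; rewrite mem_nth ?size_p.
move/(congr1 val); rewrite /= !inordK ?ltp //.
by move/eqP; rewrite nth_uniq ?size_p // => /eqP /ord_inj.
Qed.

Lemma block_is_copy : is_K4e_copy (block p).
Proof. by exists (vertex_map p); split; [exact: vertex_map_inj |]. Qed.

Lemma mem_block E : (E \in block p) = (set_vals E \in block_edges p).
Proof.
case/and3P: p_valid => /eqP size_p _ /allP p_le_m.
have edgeE t : t \in K4e_pattern ->
    (E == vertex_map p @: [set:: map inord t]) = (set_vals E == sort leq (map (nth 0 p) t)).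
  case/(allP K4e_pattern_uniq_lt5)/andP => uniq_t t_lt5.
  have val_edge : map val (map (vertex_map p) (map inord t)) = map (nth 0 p) t.
    have -> : map (vertex_map p) (map inord t) =
        map (@inord m) (map (nth 0 p) (map val (map (@inord 4) t))).
      by rewrite -!map_comp.
    rewrite map_inordK // map_inordK //; apply/allP => _ /mapP [i it ->].
    by apply: p_le_m; rewrite mem_nth // size_p; exact: (allP t_lt5).
  rewrite imset_set_seq -{1}[E]set_enum eq_set_seq_sort ?enum_uniq //.
    rewrite -[map val (enum E)]/(set_vals E) val_edge (sorted_sort leq_trans) //.
    by have := set_vals_sorted E; rewrite ltn_sorted_uniq_leq => /andP [].
  rewrite (map_inj_uniq vertex_map_inj) -(map_inj_uniq val_inj) map_inordK //.
apply/imsetP/mapP => [[e] | [t tP valsE]].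
  by rewrite K4e_edgesE => /mapP [t tP ->] /eqP; rewrite edgeE // => /eqP; exists t.
by exists [set:: map inord t]; [rewrite K4e_edgesE map_f | apply/eqP; rewrite edgeE // valsE].
Qed.

End Blocks.

(* [if] rather than [==>]: under [vm_compute] the count is then only evaluated on
   allowed triples. *)
Definition covers_allowed_once g n N (F : seq (seq nat)) :=
  all (fun x => all (fun y => all (fun z =>
    if (x < y < z) && allowed_triple g n [:: x; y; z]
    then count_mem [:: x; y; z] F == 1 else true)
  (iota 0 N)) (iota 0 N)) (iota 0 N).

Lemma covers_allowed_onceP g n N F : covers_allowed_once g n N F ->
  forall E : {set 'I_N}, #|E| = 3 -> allowed_triple g n (set_vals E) ->
  count_mem (set_vals E) F = 1.
Proof.
move=> covered E /set_vals_card3 [x [y [z [ltxyz ltzN ->]]]] allowedE.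
have [ltxN ltyN] : x < N /\ y < N by lia.
have iotaN i : i < N -> i \in iota 0 N by rewrite mem_iota.
have := allP (allP (allP covered x (iotaN x ltxN)) y (iotaN y ltyN)) z (iotaN z ltzN).
by rewrite ltxyz allowedE => /eqP.
Qed.

Lemma count_le1_eq (T : eqType) (a : pred T) (s : seq T) :
  count a s <= 1 -> {in s &, forall x y, a x -> a y -> x = y}.
Proof.
rewrite -size_filter => filter_le1 x y xs ys ax ay.
have: x \in filter a s by rewrite mem_filter ax.
have: y \in filter a s by rewrite mem_filter ay.
by case: (filter a s) filter_le1 => [|z []] // _; rewrite !inE => /eqP -> /eqP ->.
Qed.

Lemma count_mem_flatten_ge (T : eqType) (x : T) (ss : seq (seq T)) :
  count (fun s => x \in s) ss <= count_mem x (flatten ss).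
Proof.
elim: ss => //= s ss IHss; rewrite count_cat leq_add //.
by rewrite -has_pred1 has_count; case: (count _ s).
Qed.

Section Certificate.

Variables (g n s m : nat) (L : seq (seq nat)).
Hypotheses (g_gt0 : 0 < g) (card_points : g * n + s = m.+1)
  (L_valid : all (valid_block m) L)
  (edges_allowed : all (allowed_triple g n) (flatten (map block_edges L)))
  (allowed_covered : covers_allowed_once g n m.+1 (flatten (map block_edges L))).

Definition design : {set {set {set 'I_m.+1}}} := [set:: map (block m) L].

Lemma design_copies B : B \in design -> is_K4e_copy B.
Proof. by rewrite inE => /mapP [p pL ->]; apply: block_is_copy; apply: (allP L_valid). Qed.

Lemma design_edge_allowed E B : B \in design -> E \in B -> allowed_triple g n (set_vals E).
Proof.
rewrite inE => /mapP [p pL ->]; rewrite mem_block ?(allP L_valid) // => Ep.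
by apply: (allP edges_allowed); apply/flatten_mapP; exists p.
Qed.

Lemma design_unique_block (E : {set 'I_m.+1}) :
  #|E| = 3 -> allowed_triple g n (set_vals E) -> #|[set B in design | E \in B]| = 1.
Proof.
move=> E3 allowedE; have count1 := covers_allowed_onceP allowed_covered E3 allowedE.
have [p0 p0L Ep0] : exists2 p, p \in L & set_vals E \in block_edges p.
  by apply/flatten_mapP; rewrite -has_pred1 has_count count1.
have unique_p : {in L &, forall p q,
    set_vals E \in block_edges p -> set_vals E \in block_edges q -> p = q}.
  apply: count_le1_eq; rewrite -count1 -(count_map block_edges (fun s => set_vals E \in s)).
  exact: count_mem_flatten_ge.
apply/eqP/cards1P; exists (block m p0); apply/setP => B; rewrite !inE.
apply/andP/eqP => [[/mapP [p pL ->]] | ->].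
  by rewrite mem_block ?(allP L_valid) // => Ep; rewrite (unique_p p p0).
by rewrite map_f // mem_block // (allP L_valid).
Qed.

Lemma CS_K4e_exists_of_certificate : CS_K4e_exists g n s.
Proof.
rewrite /CS_K4e_exists card_points.
have gn_le : g * n <= m.+1 by rewrite -card_points leq_addr.
exists (stem g n m.+1), (groups g n m.+1), design; split.
- by rewrite card_ord card_stem -card_points ?addKn.
- split; [exact: partition_groups | exact: card_groups |].
  by move=> _ /imsetP [j _ ->]; exact: card_group (ltn_ord j).
- exact: design_copies.
- move=> E E3 small; apply: design_unique_block => //.
  apply/allowed_set_valsP => j; apply/negP => sub.
  have jG : group g m.+1 j \in groups g n m.+1 by apply/imsetP; exists j.
  by have := small _ jG; rewrite (setIidPl sub) E3.
- move=> _ E B /imsetP [j _ ->] _ sub BA; apply/negP => EB.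
  by have /allowed_set_valsP /(_ j) := design_edge_allowed BA EB; rewrite sub.
Qed.

End Certificate.

(* The block [:: a; b; c; d; e] sends the vertices 1, ..., 5 of K_4^(3)+e to the points
   a, ..., e; a point x < g n lies in the group x %/ g, the two last points form the stem. *)
Definition blocks_5_3 : seq (seq nat) := [::
  [:: 5; 16; 0; 11; 1]; [:: 6; 16; 1; 12; 2]; [:: 7; 16; 2; 13; 3]; [:: 8; 16; 3; 14; 4]; [:: 9; 16; 4; 10; 0];
  [:: 1; 5; 0; 8; 9]; [:: 2; 6; 1; 9; 5]; [:: 3; 7; 2; 5; 6]; [:: 4; 8; 3; 6; 7]; [:: 0; 9; 4; 7; 8];
  [:: 13; 16; 0; 6; 15]; [:: 14; 16; 1; 7; 15]; [:: 10; 16; 2; 8; 15]; [:: 11; 16; 3; 9; 15]; [:: 12; 16; 4; 5; 15];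
  [:: 0; 7; 11; 15; 3]; [:: 1; 8; 12; 15; 4]; [:: 2; 9; 13; 15; 0]; [:: 3; 5; 14; 15; 1]; [:: 4; 6; 10; 15; 2];
  [:: 0; 5; 2; 9; 10]; [:: 1; 6; 3; 5; 11]; [:: 2; 7; 4; 6; 12]; [:: 3; 8; 0; 7; 13]; [:: 4; 9; 1; 8; 14];
  [:: 11; 14; 5; 7; 0]; [:: 12; 10; 6; 8; 1]; [:: 13; 11; 7; 9; 2]; [:: 14; 12; 8; 5; 3]; [:: 10; 13; 9; 6; 4];
  [:: 6; 12; 0; 5; 3]; [:: 7; 13; 1; 6; 4]; [:: 8; 14; 2; 7; 0]; [:: 9; 10; 3; 8; 1]; [:: 5; 11; 4; 9; 2];
  [:: 7; 13; 5; 12; 15]; [:: 8; 14; 6; 13; 15]; [:: 9; 10; 7; 14; 15]; [:: 5; 11; 8; 10; 15]; [:: 6; 12; 9; 11; 15];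
  [:: 0; 6; 1; 10; 7]; [:: 1; 7; 2; 11; 8]; [:: 2; 8; 3; 12; 9]; [:: 3; 9; 4; 13; 5]; [:: 4; 5; 0; 14; 6];
  [:: 10; 16; 0; 7; 6]; [:: 11; 16; 1; 8; 7]; [:: 12; 16; 2; 9; 8]; [:: 13; 16; 3; 5; 9]; [:: 14; 16; 4; 6; 5];
  [:: 5; 6; 11; 13; 2]; [:: 6; 7; 12; 14; 3]; [:: 7; 8; 13; 10; 4]; [:: 8; 9; 14; 11; 0]; [:: 9; 5; 10; 12; 1];
  [:: 9; 16; 0; 14; 7]; [:: 5; 16; 1; 10; 8]; [:: 6; 16; 2; 11; 9]; [:: 7; 16; 3; 12; 5]; [:: 8; 16; 4; 13; 6];
  [:: 14; 15; 0; 8; 10]; [:: 10; 15; 1; 9; 11]; [:: 11; 15; 2; 5; 12]; [:: 12; 15; 3; 6; 13]; [:: 13; 15; 4; 7; 14];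
  [:: 0; 2; 10; 13; 1]; [:: 1; 3; 11; 14; 2]; [:: 2; 4; 12; 10; 3]; [:: 3; 0; 13; 11; 4]; [:: 4; 1; 14; 12; 0];
  [:: 2; 6; 0; 8; 13]; [:: 3; 7; 1; 9; 14]; [:: 4; 8; 2; 5; 10]; [:: 0; 9; 3; 6; 11]; [:: 1; 5; 4; 7; 12];
  [:: 13; 14; 0; 1; 9]; [:: 14; 10; 1; 2; 5]; [:: 10; 11; 2; 3; 6]; [:: 11; 12; 3; 4; 7]; [:: 12; 13; 4; 0; 8];
  [:: 8; 16; 0; 12; 3]; [:: 9; 16; 1; 13; 4]; [:: 5; 16; 2; 14; 0]; [:: 6; 16; 3; 10; 1]; [:: 7; 16; 4; 11; 2];
  [:: 2; 12; 0; 11; 8]; [:: 3; 13; 1; 12; 9]; [:: 4; 14; 2; 13; 5]; [:: 0; 10; 3; 14; 6]; [:: 1; 11; 4; 10; 7];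
  [:: 6; 14; 5; 10; 13]; [:: 7; 10; 6; 11; 14]; [:: 8; 11; 7; 12; 10]; [:: 9; 12; 8; 13; 11]; [:: 5; 13; 9; 14; 12];
  [:: 10; 15; 0; 5; 13]; [:: 11; 15; 1; 6; 14]; [:: 12; 15; 2; 7; 10]; [:: 13; 15; 3; 8; 11]; [:: 14; 15; 4; 9; 12];
  [:: 1; 7; 0; 12; 10]; [:: 2; 8; 1; 13; 11]; [:: 3; 9; 2; 14; 12]; [:: 4; 5; 3; 10; 13]; [:: 0; 6; 4; 11; 14];
  [:: 10; 11; 0; 9; 13]; [:: 11; 12; 1; 5; 14]; [:: 12; 13; 2; 6; 10]; [:: 13; 14; 3; 7; 11]; [:: 14; 10; 4; 8; 12];
  [:: 0; 15; 9; 12; 7]; [:: 1; 15; 5; 13; 8]; [:: 2; 15; 6; 14; 9]; [:: 3; 15; 7; 10; 5]; [:: 4; 15; 8; 11; 6]].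

Definition blocks_5_5 : seq (seq nat) := [::
  [:: 0; 2; 7; 12; 25]; [:: 1; 3; 8; 13; 25]; [:: 2; 4; 9; 14; 25]; [:: 3; 0; 5; 10; 25]; [:: 4; 1; 6; 11; 25];
  [:: 5; 7; 12; 17; 25]; [:: 6; 8; 13; 18; 25]; [:: 7; 9; 14; 19; 25]; [:: 8; 5; 10; 15; 25]; [:: 9; 6; 11; 16; 25];
  [:: 10; 12; 17; 22; 25]; [:: 11; 13; 18; 23; 25]; [:: 12; 14; 19; 24; 25]; [:: 13; 10; 15; 20; 25]; [:: 14; 11; 16; 21; 25];
  [:: 15; 17; 22; 2; 25]; [:: 16; 18; 23; 3; 25]; [:: 17; 19; 24; 4; 25]; [:: 18; 15; 20; 0; 25]; [:: 19; 16; 21; 1; 25];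
  [:: 20; 22; 2; 7; 25]; [:: 21; 23; 3; 8; 25]; [:: 22; 24; 4; 9; 25]; [:: 23; 20; 0; 5; 25]; [:: 24; 21; 1; 6; 25];
  [:: 5; 19; 0; 2; 6]; [:: 6; 15; 1; 3; 7]; [:: 7; 16; 2; 4; 8]; [:: 8; 17; 3; 0; 9]; [:: 9; 18; 4; 1; 5];
  [:: 10; 24; 5; 7; 11]; [:: 11; 20; 6; 8; 12]; [:: 12; 21; 7; 9; 13]; [:: 13; 22; 8; 5; 14]; [:: 14; 23; 9; 6; 10];
  [:: 15; 4; 10; 12; 16]; [:: 16; 0; 11; 13; 17]; [:: 17; 1; 12; 14; 18]; [:: 18; 2; 13; 10; 19]; [:: 19; 3; 14; 11; 15];
  [:: 20; 9; 15; 17; 21]; [:: 21; 5; 16; 18; 22]; [:: 22; 6; 17; 19; 23]; [:: 23; 7; 18; 15; 24]; [:: 24; 8; 19; 16; 20];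
  [:: 0; 14; 20; 22; 1]; [:: 1; 10; 21; 23; 2]; [:: 2; 11; 22; 24; 3]; [:: 3; 12; 23; 20; 4]; [:: 4; 13; 24; 21; 0];
  [:: 5; 26; 0; 13; 12]; [:: 6; 26; 1; 14; 13]; [:: 7; 26; 2; 10; 14]; [:: 8; 26; 3; 11; 10]; [:: 9; 26; 4; 12; 11];
  [:: 10; 26; 5; 18; 17]; [:: 11; 26; 6; 19; 18]; [:: 12; 26; 7; 15; 19]; [:: 13; 26; 8; 16; 15]; [:: 14; 26; 9; 17; 16];
  [:: 15; 26; 10; 23; 22]; [:: 16; 26; 11; 24; 23]; [:: 17; 26; 12; 20; 24]; [:: 18; 26; 13; 21; 20]; [:: 19; 26; 14; 22; 21];
  [:: 20; 26; 15; 3; 2]; [:: 21; 26; 16; 4; 3]; [:: 22; 26; 17; 0; 4]; [:: 23; 26; 18; 1; 0]; [:: 24; 26; 19; 2; 1];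
  [:: 0; 26; 20; 8; 7]; [:: 1; 26; 21; 9; 8]; [:: 2; 26; 22; 5; 9]; [:: 3; 26; 23; 6; 5]; [:: 4; 26; 24; 7; 6];
  [:: 2; 10; 0; 23; 13]; [:: 3; 11; 1; 24; 14]; [:: 4; 12; 2; 20; 10]; [:: 0; 13; 3; 21; 11]; [:: 1; 14; 4; 22; 12];
  [:: 7; 15; 5; 3; 18]; [:: 8; 16; 6; 4; 19]; [:: 9; 17; 7; 0; 15]; [:: 5; 18; 8; 1; 16]; [:: 6; 19; 9; 2; 17];
  [:: 12; 20; 10; 8; 23]; [:: 13; 21; 11; 9; 24]; [:: 14; 22; 12; 5; 20]; [:: 10; 23; 13; 6; 21]; [:: 11; 24; 14; 7; 22];
  [:: 17; 0; 15; 13; 3]; [:: 18; 1; 16; 14; 4]; [:: 19; 2; 17; 10; 0]; [:: 15; 3; 18; 11; 1]; [:: 16; 4; 19; 12; 2];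
  [:: 22; 5; 20; 18; 8]; [:: 23; 6; 21; 19; 9]; [:: 24; 7; 22; 15; 5]; [:: 20; 8; 23; 16; 6]; [:: 21; 9; 24; 17; 7];
  [:: 0; 15; 2; 11; 7]; [:: 1; 16; 3; 12; 8]; [:: 2; 17; 4; 13; 9]; [:: 3; 18; 0; 14; 5]; [:: 4; 19; 1; 10; 6];
  [:: 5; 20; 7; 16; 12]; [:: 6; 21; 8; 17; 13]; [:: 7; 22; 9; 18; 14]; [:: 8; 23; 5; 19; 10]; [:: 9; 24; 6; 15; 11];
  [:: 10; 0; 12; 21; 17]; [:: 11; 1; 13; 22; 18]; [:: 12; 2; 14; 23; 19]; [:: 13; 3; 10; 24; 15]; [:: 14; 4; 11; 20; 16];
  [:: 15; 5; 17; 1; 22]; [:: 16; 6; 18; 2; 23]; [:: 17; 7; 19; 3; 24]; [:: 18; 8; 15; 4; 20]; [:: 19; 9; 16; 0; 21];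
  [:: 20; 10; 22; 6; 2]; [:: 21; 11; 23; 7; 3]; [:: 22; 12; 24; 8; 4]; [:: 23; 13; 20; 9; 0]; [:: 24; 14; 21; 5; 1];
  [:: 1; 7; 0; 21; 2]; [:: 2; 8; 1; 22; 3]; [:: 3; 9; 2; 23; 4]; [:: 4; 5; 3; 24; 0]; [:: 0; 6; 4; 20; 1];
  [:: 6; 12; 5; 1; 7]; [:: 7; 13; 6; 2; 8]; [:: 8; 14; 7; 3; 9]; [:: 9; 10; 8; 4; 5]; [:: 5; 11; 9; 0; 6];
  [:: 11; 17; 10; 6; 12]; [:: 12; 18; 11; 7; 13]; [:: 13; 19; 12; 8; 14]; [:: 14; 15; 13; 9; 10]; [:: 10; 16; 14; 5; 11];
  [:: 16; 22; 15; 11; 17]; [:: 17; 23; 16; 12; 18]; [:: 18; 24; 17; 13; 19]; [:: 19; 20; 18; 14; 15]; [:: 15; 21; 19; 10; 16];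
  [:: 21; 2; 20; 16; 22]; [:: 22; 3; 21; 17; 23]; [:: 23; 4; 22; 18; 24]; [:: 24; 0; 23; 19; 20]; [:: 20; 1; 24; 15; 21];
  [:: 8; 12; 0; 25; 10]; [:: 9; 13; 1; 25; 11]; [:: 5; 14; 2; 25; 12]; [:: 6; 10; 3; 25; 13]; [:: 7; 11; 4; 25; 14];
  [:: 13; 17; 5; 25; 15]; [:: 14; 18; 6; 25; 16]; [:: 10; 19; 7; 25; 17]; [:: 11; 15; 8; 25; 18]; [:: 12; 16; 9; 25; 19];
  [:: 18; 22; 10; 25; 20]; [:: 19; 23; 11; 25; 21]; [:: 15; 24; 12; 25; 22]; [:: 16; 20; 13; 25; 23]; [:: 17; 21; 14; 25; 24];
  [:: 23; 2; 15; 25; 0]; [:: 24; 3; 16; 25; 1]; [:: 20; 4; 17; 25; 2]; [:: 21; 0; 18; 25; 3]; [:: 22; 1; 19; 25; 4];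
  [:: 3; 7; 20; 25; 5]; [:: 4; 8; 21; 25; 6]; [:: 0; 9; 22; 25; 7]; [:: 1; 5; 23; 25; 8]; [:: 2; 6; 24; 25; 9];
  [:: 5; 22; 0; 1; 23]; [:: 6; 23; 1; 2; 24]; [:: 7; 24; 2; 3; 20]; [:: 8; 20; 3; 4; 21]; [:: 9; 21; 4; 0; 22];
  [:: 10; 2; 5; 6; 3]; [:: 11; 3; 6; 7; 4]; [:: 12; 4; 7; 8; 0]; [:: 13; 0; 8; 9; 1]; [:: 14; 1; 9; 5; 2];
  [:: 15; 7; 10; 11; 8]; [:: 16; 8; 11; 12; 9]; [:: 17; 9; 12; 13; 5]; [:: 18; 5; 13; 14; 6]; [:: 19; 6; 14; 10; 7];
  [:: 20; 12; 15; 16; 13]; [:: 21; 13; 16; 17; 14]; [:: 22; 14; 17; 18; 10]; [:: 23; 10; 18; 19; 11]; [:: 24; 11; 19; 15; 12];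
  [:: 0; 17; 20; 21; 18]; [:: 1; 18; 21; 22; 19]; [:: 2; 19; 22; 23; 15]; [:: 3; 15; 23; 24; 16]; [:: 4; 16; 24; 20; 17];
  [:: 0; 14; 1; 19; 26]; [:: 1; 10; 2; 15; 26]; [:: 2; 11; 3; 16; 26]; [:: 3; 12; 4; 17; 26]; [:: 4; 13; 0; 18; 26];
  [:: 5; 19; 6; 24; 26]; [:: 6; 15; 7; 20; 26]; [:: 7; 16; 8; 21; 26]; [:: 8; 17; 9; 22; 26]; [:: 9; 18; 5; 23; 26];
  [:: 10; 24; 11; 4; 26]; [:: 11; 20; 12; 0; 26]; [:: 12; 21; 13; 1; 26]; [:: 13; 22; 14; 2; 26]; [:: 14; 23; 10; 3; 26];
  [:: 15; 4; 16; 9; 26]; [:: 16; 0; 17; 5; 26]; [:: 17; 1; 18; 6; 26]; [:: 18; 2; 19; 7; 26]; [:: 19; 3; 15; 8; 26];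
  [:: 20; 9; 21; 14; 26]; [:: 21; 5; 22; 10; 26]; [:: 22; 6; 23; 11; 26]; [:: 23; 7; 24; 12; 26]; [:: 24; 8; 20; 13; 26];
  [:: 1; 20; 0; 16; 4]; [:: 2; 21; 1; 17; 0]; [:: 3; 22; 2; 18; 1]; [:: 4; 23; 3; 19; 2]; [:: 0; 24; 4; 15; 3];
  [:: 6; 0; 5; 21; 9]; [:: 7; 1; 6; 22; 5]; [:: 8; 2; 7; 23; 6]; [:: 9; 3; 8; 24; 7]; [:: 5; 4; 9; 20; 8];
  [:: 11; 5; 10; 1; 14]; [:: 12; 6; 11; 2; 10]; [:: 13; 7; 12; 3; 11]; [:: 14; 8; 13; 4; 12]; [:: 10; 9; 14; 0; 13];
  [:: 16; 10; 15; 6; 19]; [:: 17; 11; 16; 7; 15]; [:: 18; 12; 17; 8; 16]; [:: 19; 13; 18; 9; 17]; [:: 15; 14; 19; 5; 18];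
  [:: 21; 15; 20; 11; 24]; [:: 22; 16; 21; 12; 20]; [:: 23; 17; 22; 13; 21]; [:: 24; 18; 23; 14; 22]; [:: 20; 19; 24; 10; 23];
  [:: 0; 22; 2; 16; 17]; [:: 1; 23; 3; 17; 18]; [:: 2; 24; 4; 18; 19]; [:: 3; 20; 0; 19; 15]; [:: 4; 21; 1; 15; 16];
  [:: 5; 2; 7; 21; 22]; [:: 6; 3; 8; 22; 23]; [:: 7; 4; 9; 23; 24]; [:: 8; 0; 5; 24; 20]; [:: 9; 1; 6; 20; 21];
  [:: 10; 7; 12; 1; 2]; [:: 11; 8; 13; 2; 3]; [:: 12; 9; 14; 3; 4]; [:: 13; 5; 10; 4; 0]; [:: 14; 6; 11; 0; 1];
  [:: 15; 12; 17; 6; 7]; [:: 16; 13; 18; 7; 8]; [:: 17; 14; 19; 8; 9]; [:: 18; 10; 15; 9; 5]; [:: 19; 11; 16; 5; 6];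
  [:: 20; 17; 22; 11; 12]; [:: 21; 18; 23; 12; 13]; [:: 22; 19; 24; 13; 14]; [:: 23; 15; 20; 14; 10]; [:: 24; 16; 21; 10; 11];
  [:: 1; 9; 0; 15; 10]; [:: 2; 5; 1; 16; 11]; [:: 3; 6; 2; 17; 12]; [:: 4; 7; 3; 18; 13]; [:: 0; 8; 4; 19; 14];
  [:: 6; 14; 5; 20; 15]; [:: 7; 10; 6; 21; 16]; [:: 8; 11; 7; 22; 17]; [:: 9; 12; 8; 23; 18]; [:: 5; 13; 9; 24; 19];
  [:: 11; 19; 10; 0; 20]; [:: 12; 15; 11; 1; 21]; [:: 13; 16; 12; 2; 22]; [:: 14; 17; 13; 3; 23]; [:: 10; 18; 14; 4; 24];
  [:: 16; 24; 15; 5; 0]; [:: 17; 20; 16; 6; 1]; [:: 18; 21; 17; 7; 2]; [:: 19; 22; 18; 8; 3]; [:: 15; 23; 19; 9; 4];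
  [:: 21; 4; 20; 10; 5]; [:: 22; 0; 21; 11; 6]; [:: 23; 1; 22; 12; 7]; [:: 24; 2; 23; 13; 8]; [:: 20; 3; 24; 14; 9];
  [:: 0; 2; 9; 18; 25]; [:: 1; 3; 5; 19; 25]; [:: 2; 4; 6; 15; 25]; [:: 3; 0; 7; 16; 25]; [:: 4; 1; 8; 17; 25];
  [:: 5; 7; 14; 23; 25]; [:: 6; 8; 10; 24; 25]; [:: 7; 9; 11; 20; 25]; [:: 8; 5; 12; 21; 25]; [:: 9; 6; 13; 22; 25];
  [:: 10; 12; 19; 3; 25]; [:: 11; 13; 15; 4; 25]; [:: 12; 14; 16; 0; 25]; [:: 13; 10; 17; 1; 25]; [:: 14; 11; 18; 2; 25];
  [:: 15; 17; 24; 8; 25]; [:: 16; 18; 20; 9; 25]; [:: 17; 19; 21; 5; 25]; [:: 18; 15; 22; 6; 25]; [:: 19; 16; 23; 7; 25];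
  [:: 20; 22; 4; 13; 25]; [:: 21; 23; 0; 14; 25]; [:: 22; 24; 1; 10; 25]; [:: 23; 20; 2; 11; 25]; [:: 24; 21; 3; 12; 25];
  [:: 0; 8; 1; 10; 20]; [:: 1; 9; 2; 11; 21]; [:: 2; 5; 3; 12; 22]; [:: 3; 6; 4; 13; 23]; [:: 4; 7; 0; 14; 24];
  [:: 5; 13; 6; 15; 0]; [:: 6; 14; 7; 16; 1]; [:: 7; 10; 8; 17; 2]; [:: 8; 11; 9; 18; 3]; [:: 9; 12; 5; 19; 4];
  [:: 10; 18; 11; 20; 5]; [:: 11; 19; 12; 21; 6]; [:: 12; 15; 13; 22; 7]; [:: 13; 16; 14; 23; 8]; [:: 14; 17; 10; 24; 9];
  [:: 15; 23; 16; 0; 10]; [:: 16; 24; 17; 1; 11]; [:: 17; 20; 18; 2; 12]; [:: 18; 21; 19; 3; 13]; [:: 19; 22; 15; 4; 14];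
  [:: 20; 3; 21; 5; 15]; [:: 21; 4; 22; 6; 16]; [:: 22; 0; 23; 7; 17]; [:: 23; 1; 24; 8; 18]; [:: 24; 2; 20; 9; 19];
  [:: 0; 17; 2; 24; 10]; [:: 1; 18; 3; 20; 11]; [:: 2; 19; 4; 21; 12]; [:: 3; 15; 0; 22; 13]; [:: 4; 16; 1; 23; 14];
  [:: 5; 22; 7; 4; 15]; [:: 6; 23; 8; 0; 16]; [:: 7; 24; 9; 1; 17]; [:: 8; 20; 5; 2; 18]; [:: 9; 21; 6; 3; 19];
  [:: 10; 2; 12; 9; 20]; [:: 11; 3; 13; 5; 21]; [:: 12; 4; 14; 6; 22]; [:: 13; 0; 10; 7; 23]; [:: 14; 1; 11; 8; 24];
  [:: 15; 7; 17; 14; 0]; [:: 16; 8; 18; 10; 1]; [:: 17; 9; 19; 11; 2]; [:: 18; 5; 15; 12; 3]; [:: 19; 6; 16; 13; 4];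
  [:: 20; 12; 22; 19; 5]; [:: 21; 13; 23; 15; 6]; [:: 22; 14; 24; 16; 7]; [:: 23; 10; 20; 17; 8]; [:: 24; 11; 21; 18; 9];
  [:: 7; 26; 0; 11; 8]; [:: 8; 26; 1; 12; 9]; [:: 9; 26; 2; 13; 5]; [:: 5; 26; 3; 14; 6]; [:: 6; 26; 4; 10; 7];
  [:: 12; 26; 5; 16; 13]; [:: 13; 26; 6; 17; 14]; [:: 14; 26; 7; 18; 10]; [:: 10; 26; 8; 19; 11]; [:: 11; 26; 9; 15; 12];
  [:: 17; 26; 10; 21; 18]; [:: 18; 26; 11; 22; 19]; [:: 19; 26; 12; 23; 15]; [:: 15; 26; 13; 24; 16]; [:: 16; 26; 14; 20; 17];
  [:: 22; 26; 15; 1; 23]; [:: 23; 26; 16; 2; 24]; [:: 24; 26; 17; 3; 20]; [:: 20; 26; 18; 4; 21]; [:: 21; 26; 19; 0; 22];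
  [:: 2; 26; 20; 6; 3]; [:: 3; 26; 21; 7; 4]; [:: 4; 26; 22; 8; 0]; [:: 0; 26; 23; 9; 1]; [:: 1; 26; 24; 5; 2];
  [:: 0; 6; 19; 25; 21]; [:: 1; 7; 15; 25; 22]; [:: 2; 8; 16; 25; 23]; [:: 3; 9; 17; 25; 24]; [:: 4; 5; 18; 25; 20];
  [:: 5; 11; 24; 25; 1]; [:: 6; 12; 20; 25; 2]; [:: 7; 13; 21; 25; 3]; [:: 8; 14; 22; 25; 4]; [:: 9; 10; 23; 25; 0];
  [:: 10; 16; 4; 25; 6]; [:: 11; 17; 0; 25; 7]; [:: 12; 18; 1; 25; 8]; [:: 13; 19; 2; 25; 9]; [:: 14; 15; 3; 25; 5];
  [:: 15; 21; 9; 25; 11]; [:: 16; 22; 5; 25; 12]; [:: 17; 23; 6; 25; 13]; [:: 18; 24; 7; 25; 14]; [:: 19; 20; 8; 25; 10];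
  [:: 20; 1; 14; 25; 16]; [:: 21; 2; 10; 25; 17]; [:: 22; 3; 11; 25; 18]; [:: 23; 4; 12; 25; 19]; [:: 24; 0; 13; 25; 15];
  [:: 6; 10; 0; 18; 11]; [:: 7; 11; 1; 19; 12]; [:: 8; 12; 2; 15; 13]; [:: 9; 13; 3; 16; 14]; [:: 5; 14; 4; 17; 10];
  [:: 11; 15; 5; 23; 16]; [:: 12; 16; 6; 24; 17]; [:: 13; 17; 7; 20; 18]; [:: 14; 18; 8; 21; 19]; [:: 10; 19; 9; 22; 15];
  [:: 16; 20; 10; 3; 21]; [:: 17; 21; 11; 4; 22]; [:: 18; 22; 12; 0; 23]; [:: 19; 23; 13; 1; 24]; [:: 15; 24; 14; 2; 20];
  [:: 21; 0; 15; 8; 1]; [:: 22; 1; 16; 9; 2]; [:: 23; 2; 17; 5; 3]; [:: 24; 3; 18; 6; 4]; [:: 20; 4; 19; 7; 0];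
  [:: 1; 5; 20; 13; 6]; [:: 2; 6; 21; 14; 7]; [:: 3; 7; 22; 10; 8]; [:: 4; 8; 23; 11; 9]; [:: 0; 9; 24; 12; 5];
  [:: 6; 13; 0; 1; 24]; [:: 7; 14; 1; 2; 20]; [:: 8; 10; 2; 3; 21]; [:: 9; 11; 3; 4; 22]; [:: 5; 12; 4; 0; 23];
  [:: 11; 18; 5; 6; 4]; [:: 12; 19; 6; 7; 0]; [:: 13; 15; 7; 8; 1]; [:: 14; 16; 8; 9; 2]; [:: 10; 17; 9; 5; 3];
  [:: 16; 23; 10; 11; 9]; [:: 17; 24; 11; 12; 5]; [:: 18; 20; 12; 13; 6]; [:: 19; 21; 13; 14; 7]; [:: 15; 22; 14; 10; 8];
  [:: 21; 3; 15; 16; 14]; [:: 22; 4; 16; 17; 10]; [:: 23; 0; 17; 18; 11]; [:: 24; 1; 18; 19; 12]; [:: 20; 2; 19; 15; 13];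
  [:: 1; 8; 20; 21; 19]; [:: 2; 9; 21; 22; 15]; [:: 3; 5; 22; 23; 16]; [:: 4; 6; 23; 24; 17]; [:: 0; 7; 24; 20; 18];
  [:: 0; 26; 6; 16; 3]; [:: 1; 26; 7; 17; 4]; [:: 2; 26; 8; 18; 0]; [:: 3; 26; 9; 19; 1]; [:: 4; 26; 5; 15; 2];
  [:: 5; 26; 11; 21; 8]; [:: 6; 26; 12; 22; 9]; [:: 7; 26; 13; 23; 5]; [:: 8; 26; 14; 24; 6]; [:: 9; 26; 10; 20; 7];
  [:: 10; 26; 16; 1; 13]; [:: 11; 26; 17; 2; 14]; [:: 12; 26; 18; 3; 10]; [:: 13; 26; 19; 4; 11]; [:: 14; 26; 15; 0; 12];
  [:: 15; 26; 21; 6; 18]; [:: 16; 26; 22; 7; 19]; [:: 17; 26; 23; 8; 15]; [:: 18; 26; 24; 9; 16]; [:: 19; 26; 20; 5; 17];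
  [:: 20; 26; 1; 11; 23]; [:: 21; 26; 2; 12; 24]; [:: 22; 26; 3; 13; 20]; [:: 23; 26; 4; 14; 21]; [:: 24; 26; 0; 10; 22];
  [:: 0; 20; 2; 13; 21]; [:: 1; 21; 3; 14; 22]; [:: 2; 22; 4; 10; 23]; [:: 3; 23; 0; 11; 24]; [:: 4; 24; 1; 12; 20];
  [:: 5; 0; 7; 18; 1]; [:: 6; 1; 8; 19; 2]; [:: 7; 2; 9; 15; 3]; [:: 8; 3; 5; 16; 4]; [:: 9; 4; 6; 17; 0];
  [:: 10; 5; 12; 23; 6]; [:: 11; 6; 13; 24; 7]; [:: 12; 7; 14; 20; 8]; [:: 13; 8; 10; 21; 9]; [:: 14; 9; 11; 22; 5];
  [:: 15; 10; 17; 3; 11]; [:: 16; 11; 18; 4; 12]; [:: 17; 12; 19; 0; 13]; [:: 18; 13; 15; 1; 14]; [:: 19; 14; 16; 2; 10];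
  [:: 20; 15; 22; 8; 16]; [:: 21; 16; 23; 9; 17]; [:: 22; 17; 24; 5; 18]; [:: 23; 18; 20; 6; 19]; [:: 24; 19; 21; 7; 15];
  [:: 0; 8; 2; 14; 3]; [:: 1; 9; 3; 10; 4]; [:: 2; 5; 4; 11; 0]; [:: 3; 6; 0; 12; 1]; [:: 4; 7; 1; 13; 2];
  [:: 5; 13; 7; 19; 8]; [:: 6; 14; 8; 15; 9]; [:: 7; 10; 9; 16; 5]; [:: 8; 11; 5; 17; 6]; [:: 9; 12; 6; 18; 7];
  [:: 10; 18; 12; 24; 13]; [:: 11; 19; 13; 20; 14]; [:: 12; 15; 14; 21; 10]; [:: 13; 16; 10; 22; 11]; [:: 14; 17; 11; 23; 12];
  [:: 15; 23; 17; 4; 18]; [:: 16; 24; 18; 0; 19]; [:: 17; 20; 19; 1; 15]; [:: 18; 21; 15; 2; 16]; [:: 19; 22; 16; 3; 17];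
  [:: 20; 3; 22; 9; 23]; [:: 21; 4; 23; 5; 24]; [:: 22; 0; 24; 6; 20]; [:: 23; 1; 20; 7; 21]; [:: 24; 2; 21; 8; 22]].

Definition blocks_10_2 : seq (seq nat) := [::
  [:: 18; 11; 9; 0; 19]; [:: 17; 12; 9; 0; 10]; [:: 9; 0; 16; 13; 3]; [:: 9; 0; 15; 14; 5]; [:: 8; 1; 19; 10; 9];
  [:: 17; 12; 8; 1; 18]; [:: 16; 13; 8; 1; 11]; [:: 8; 1; 15; 14; 4]; [:: 7; 2; 19; 10; 0]; [:: 7; 2; 18; 11; 8];
  [:: 16; 13; 7; 2; 17]; [:: 15; 14; 7; 2; 12]; [:: 19; 10; 6; 3; 13]; [:: 6; 3; 18; 11; 1]; [:: 6; 3; 17; 12; 7];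
  [:: 15; 14; 6; 3; 16]; [:: 19; 10; 5; 4; 15]; [:: 18; 11; 5; 4; 14]; [:: 5; 4; 17; 12; 2]; [:: 5; 4; 16; 13; 6];
  [:: 3; 13; 0; 10; 20]; [:: 8; 17; 0; 11; 20]; [:: 1; 18; 0; 12; 20]; [:: 6; 19; 0; 13; 20]; [:: 4; 10; 0; 14; 20];
  [:: 8; 13; 0; 15; 20]; [:: 2; 15; 0; 16; 20]; [:: 2; 14; 0; 17; 20]; [:: 6; 17; 0; 18; 20]; [:: 3; 16; 0; 19; 20];
  [:: 0; 11; 1; 10; 20]; [:: 7; 17; 1; 11; 20]; [:: 4; 13; 1; 12; 20]; [:: 7; 15; 1; 13; 20]; [:: 3; 10; 1; 14; 20];
  [:: 5; 11; 1; 15; 20]; [:: 9; 15; 1; 16; 20]; [:: 3; 16; 1; 17; 20]; [:: 5; 17; 1; 18; 20]; [:: 7; 14; 1; 19; 20];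
  [:: 8; 11; 2; 10; 20]; [:: 9; 13; 2; 11; 20]; [:: 0; 10; 2; 12; 20]; [:: 8; 17; 2; 13; 20]; [:: 6; 19; 2; 14; 20];
  [:: 8; 19; 2; 15; 20]; [:: 8; 14; 2; 16; 20]; [:: 4; 18; 2; 17; 20]; [:: 1; 14; 2; 18; 20]; [:: 4; 13; 2; 19; 20];
  [:: 5; 18; 3; 10; 20]; [:: 7; 10; 3; 11; 20]; [:: 0; 11; 3; 12; 20]; [:: 9; 19; 3; 13; 20]; [:: 5; 19; 3; 14; 20];
  [:: 5; 13; 3; 15; 20]; [:: 5; 12; 3; 16; 20]; [:: 2; 19; 3; 17; 20]; [:: 0; 14; 3; 18; 20]; [:: 7; 15; 3; 19; 20];
  [:: 6; 11; 4; 10; 20]; [:: 8; 12; 4; 11; 20]; [:: 3; 15; 4; 12; 20]; [:: 8; 10; 4; 13; 20]; [:: 3; 13; 4; 14; 20];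
  [:: 6; 19; 4; 15; 20]; [:: 3; 11; 4; 16; 20]; [:: 9; 11; 4; 17; 20]; [:: 1; 16; 4; 18; 20]; [:: 8; 16; 4; 19; 20];
  [:: 9; 11; 5; 10; 20]; [:: 2; 16; 5; 11; 20]; [:: 9; 18; 5; 12; 20]; [:: 1; 19; 5; 13; 20]; [:: 9; 16; 5; 14; 20];
  [:: 0; 10; 5; 15; 20]; [:: 8; 17; 5; 16; 20]; [:: 0; 19; 5; 17; 20]; [:: 7; 14; 5; 18; 20]; [:: 7; 16; 5; 19; 20];
  [:: 8; 15; 6; 10; 20]; [:: 8; 14; 6; 11; 20]; [:: 2; 16; 6; 12; 20]; [:: 2; 15; 6; 13; 20]; [:: 5; 17; 6; 14; 20];
  [:: 5; 16; 6; 15; 20]; [:: 4; 14; 6; 16; 20]; [:: 8; 19; 6; 17; 20]; [:: 9; 14; 6; 18; 20]; [:: 9; 16; 6; 19; 20];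
  [:: 1; 18; 7; 10; 20]; [:: 6; 13; 7; 11; 20]; [:: 3; 18; 7; 12; 20]; [:: 4; 18; 7; 13; 20]; [:: 9; 11; 7; 14; 20];
  [:: 9; 10; 7; 15; 20]; [:: 0; 11; 7; 16; 20]; [:: 4; 14; 7; 17; 20]; [:: 0; 19; 7; 18; 20]; [:: 6; 12; 7; 19; 20];
  [:: 0; 18; 8; 10; 20]; [:: 3; 19; 8; 11; 20]; [:: 0; 16; 8; 12; 20]; [:: 6; 12; 8; 13; 20]; [:: 9; 13; 8; 14; 20];
  [:: 3; 16; 8; 15; 20]; [:: 9; 11; 8; 16; 20]; [:: 7; 18; 8; 17; 20]; [:: 5; 15; 8; 18; 20]; [:: 0; 14; 8; 19; 20];
  [:: 1; 12; 9; 10; 20]; [:: 1; 19; 9; 11; 20]; [:: 2; 19; 9; 12; 20]; [:: 7; 12; 9; 13; 20]; [:: 4; 19; 9; 14; 20];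
  [:: 6; 17; 9; 15; 20]; [:: 4; 12; 9; 16; 20]; [:: 8; 10; 9; 17; 20]; [:: 4; 10; 9; 18; 20]; [:: 5; 15; 9; 19; 20];
  [:: 6; 16; 0; 10; 21]; [:: 6; 15; 0; 11; 21]; [:: 4; 19; 0; 12; 21]; [:: 4; 11; 0; 13; 21]; [:: 6; 12; 0; 14; 21];
  [:: 4; 18; 0; 15; 21]; [:: 4; 17; 0; 16; 21]; [:: 1; 13; 0; 17; 21]; [:: 2; 13; 0; 18; 21]; [:: 2; 11; 0; 19; 21];
  [:: 5; 16; 1; 10; 21]; [:: 4; 14; 1; 11; 21]; [:: 7; 16; 1; 12; 21]; [:: 3; 11; 1; 13; 21]; [:: 5; 12; 1; 14; 21];
  [:: 3; 18; 1; 15; 21]; [:: 0; 14; 1; 16; 21]; [:: 4; 19; 1; 17; 21]; [:: 9; 13; 1; 18; 21]; [:: 0; 15; 1; 19; 21];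
  [:: 5; 17; 2; 10; 21]; [:: 6; 17; 2; 11; 21]; [:: 1; 11; 2; 12; 21]; [:: 1; 10; 2; 13; 21]; [:: 3; 11; 2; 14; 21];
  [:: 1; 17; 2; 15; 21]; [:: 4; 10; 2; 16; 21]; [:: 9; 16; 2; 17; 21]; [:: 8; 12; 2; 18; 21]; [:: 1; 16; 2; 19; 21];
  [:: 2; 15; 3; 10; 21]; [:: 5; 17; 3; 11; 21]; [:: 9; 14; 3; 12; 21]; [:: 2; 12; 3; 13; 21]; [:: 7; 16; 3; 14; 21];
  [:: 0; 17; 3; 15; 21]; [:: 9; 10; 3; 16; 21]; [:: 7; 13; 3; 17; 21]; [:: 2; 16; 3; 18; 21]; [:: 1; 12; 3; 19; 21];
  [:: 1; 15; 4; 10; 21]; [:: 2; 15; 4; 11; 21]; [:: 2; 14; 4; 12; 21]; [:: 6; 17; 4; 13; 21]; [:: 8; 18; 4; 14; 21];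
  [:: 8; 17; 4; 15; 21]; [:: 7; 15; 4; 16; 21]; [:: 3; 10; 4; 17; 21]; [:: 6; 12; 4; 18; 21]; [:: 3; 18; 4; 19; 21];
  [:: 7; 13; 5; 10; 21]; [:: 7; 12; 5; 11; 21]; [:: 0; 13; 5; 12; 21]; [:: 2; 14; 5; 13; 21]; [:: 0; 11; 5; 14; 21];
  [:: 2; 12; 5; 15; 21]; [:: 0; 18; 5; 16; 21]; [:: 7; 15; 5; 17; 21]; [:: 6; 13; 5; 18; 21]; [:: 2; 18; 5; 19; 21];
  [:: 2; 18; 6; 10; 21]; [:: 1; 16; 6; 11; 21]; [:: 5; 10; 6; 12; 21]; [:: 9; 10; 6; 13; 21]; [:: 1; 13; 6; 14; 21];
  [:: 1; 12; 6; 15; 21]; [:: 8; 18; 6; 16; 21]; [:: 1; 10; 6; 17; 21]; [:: 1; 19; 6; 18; 21]; [:: 5; 11; 6; 19; 21];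
  [:: 6; 14; 7; 10; 21]; [:: 4; 19; 7; 11; 21]; [:: 4; 10; 7; 12; 21]; [:: 8; 19; 7; 13; 21]; [:: 0; 13; 7; 14; 21];
  [:: 0; 12; 7; 15; 21]; [:: 6; 17; 7; 16; 21]; [:: 0; 10; 7; 17; 21]; [:: 6; 15; 7; 18; 21]; [:: 9; 17; 7; 19; 21];
  [:: 3; 12; 8; 10; 21]; [:: 7; 15; 8; 11; 21]; [:: 7; 14; 8; 12; 21]; [:: 5; 11; 8; 13; 21]; [:: 5; 10; 8; 14; 21];
  [:: 9; 12; 8; 15; 21]; [:: 7; 10; 8; 16; 21]; [:: 3; 14; 8; 17; 21]; [:: 3; 13; 8; 18; 21]; [:: 5; 12; 8; 19; 21];
  [:: 2; 14; 9; 10; 21]; [:: 3; 15; 9; 11; 21]; [:: 6; 11; 9; 12; 21]; [:: 5; 17; 9; 13; 21]; [:: 1; 17; 9; 14; 21];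
  [:: 4; 13; 9; 15; 21]; [:: 7; 18; 9; 16; 21]; [:: 3; 18; 9; 17; 21]; [:: 2; 15; 9; 18; 21]; [:: 8; 18; 9; 19; 21]].

Theorem lemma3p6 (g n : nat) :
  (g, n) = (5, 3) \/ (g, n) = (5, 5) \/ (g, n) = (10, 2) ->
  CS_K4e_exists g n 2.
Proof.
case=> [[-> ->] | [[-> ->] | [-> ->]]].
- by apply: (@CS_K4e_exists_of_certificate _ _ _ 16 blocks_5_3); vm_compute.
- by apply: (@CS_K4e_exists_of_certificate _ _ _ 26 blocks_5_5); vm_compute.
- by apply: (@CS_K4e_exists_of_certificate _ _ _ 21 blocks_10_2); vm_compute.
Qed.
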